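(* For every $m\geq1$ and every $i\in\{1,\dots,N\}$, $$C^{(2m+1)}_{ii}\cdot v=C^{(2m+1)}_{-i,-i}\cdot v=\lambda_i(\lambda_i-1)\,C^{(2m-1)}_{ii}\cdot v-2\lambda_i\sum_{j=i+1}^{N}C^{(2m-1)}_{jj}\cdot v.$$
   Context: Let $N\geq1$, $I=\{-N,\dots,-1,1,\dots,N\}$, and for $k\in I$ put $\bar k=0$ if $k>0$, $\bar k=1$ if $k<0$. The Lie superalgebra $\mathfrak{q}(N)$ over $\mathbb{C}$ is spanned by elements $F_{ij}$ ($i,j\in I$) with $F_{-i,-j}=F_{ij}$ (realized as $F_{ij}=E_{ij}+E_{-i,-j}\in\mathfrak{gl}(N|N)$), $F_{ij}$ of parity $\bar\imath+\bar\jmath\bmod 2$, and supercommutator $$[F_{ij}, F_{kl}] = \delta_{kj} F_{il} - (-1)^{(\bar{\imath}+ \bar{\jmath})(\bar{k} + \bar{l})} \delta_{il} F_{kj} + \delta_{k,-j} F_{-i,l} - (-1)^{(\bar{\imath} + \bar{\jmath})(\bar{k} + \bar{l})} \delta_{-i,l} F_{k,-j}.$$ For $n\geq1$ define $C^{(n)}_{ij}\in U(\mathfrak{q}(N))$ by $$C^{(n)}_{ij} = \sum_{k_1,\ldots,k_{n-1}\in I}F_{ik_1} (-1)^{\bar{k}_1} F_{k_1k_2} (-1)^{\bar{k}_2} \cdots F_{k_{n-2}k_{n-1}} (-1)^{\bar{k}_{n-1}} F_{k_{n-1}j}$$ (so $C^{(1)}_{ij}=F_{ij}$). Let $V$ be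 a representation of $\mathfrak{q}(N)$ and $v\in V$ a vector such that $F_{ij}\cdot v=0$ whenever $|i|<|j|$, and $F_{ii}\cdot v=\lambda_i v$ for $i=1,\dots,N$, where $\lambda_1,\dots,\lambda_N\in\mathbb{C}$. *)

From HB Require Import structures.
From mathcomp Require Import all_boot all_order all_algebra.
Set Implicit Arguments. Unset Strict Implicit. Unset Printing Implicit Defensive.
Import Order.TTheory GRing.Theory Num.Theory.
Local Open Scope ring_scope.

(* Index set I = {-N,...,-1,1,...,N}, encoded as pairs (a, s) : 'I_N * bool,
   standing for the integer  (-1)^s * (a+1).  So |k| = k.1 + 1, and
   bar k = k.2  (bar k = 1 iff k < 0). *)
Definition idx (N : nat) : finType := ('I_N * bool)%type.

Definition ineg (N : nat) (k : idx N) : idx N := (k.1, ~~ k.2).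

Definition ipos (N : nat) (a : 'I_N) : idx N := (a, false).

Definition ipar (N : nat) (k : idx N) : nat := nat_of_bool k.2.

Definition kdelta (K : nzRingType) (T : eqType) (x y : T) : K := (x == y)%:R.

(* rho is a representation of q(N) on V: rho i j is the action of F_ij,
   with F_{-i,-j} = F_ij and the supercommutator relations of q(N). *)
Definition is_qrep (K : fieldType) (V : lmodType K) (N : nat)
  (rho : idx N -> idx N -> {linear V -> V}) : Prop :=
  (forall i j : idx N, rho (ineg i) (ineg j) = rho i j) /\
  (forall (i j k l : idx N) (w : V),
     let s : K := (-1) ^+ ((ipar i + ipar j) * (ipar k + ipar l))%N in
     rho i j (rho k l w) - s *: rho k l (rho i j w) =
       kdelta K k j *: rho i l w
     - s *: (kdelta K i l *: rho k j w)
     + kdelta K k (ineg j) *: rho (ineg i) l w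
     - s *: (kdelta K (ineg i) l *: rho k (ineg j) w)).

(* Cact rho n i j w = C^{(n)}_{ij} . w  for n >= 1 (and 0 for n = 0), via
   C^{(1)}_{ij} = F_ij and
   C^{(n+1)}_{ij} = sum_k F_{ik} (-1)^{bar k} C^{(n)}_{kj}. *)
Fixpoint Cact (K : fieldType) (V : lmodType K) (N : nat)
  (rho : idx N -> idx N -> {linear V -> V}) (n : nat) (i j : idx N) (w : V)
  {struct n} : V :=
  match n with
  | 0 => 0
  | n'.+1 =>
      if n' is 0 then rho i j w
      else \sum_(k : idx N) ((-1) ^+ ipar k) *: rho i k (Cact rho n' k j w)
  end.

(* The matrix C^(n) transforms under the adjoint action of q(N) exactly as F
   does ([Cact_comm]): [F_ij, C^(n)_{kl}] is given by the defining relation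
   for [F_ij, F_kl] with C^(n) in place of every F other than F_ij.  Applied to the highest-weight vector v
   this gives C^(n)_{kl} v = 0 for |k| < |l| and shows that each C^(n)_{kl} v
   with |k| = |l| = i is a lambda_i-eigenvector of F_ii.  Expanding
   C^(n+1)_{ii} v and C^(n+1)_{-i,i} v along their first index then gives a
   coupled recursion between the diagonal and the off-diagonal vectors; two
   steps of it, together with F_{i,-i}^2 = F_ii, eliminate the off-diagonal
   term.  The identity C_{ii} = C_{-i,-i} in odd degree is the symmetry
   C^(n+1)_{-k,-l} = (-1)^n C^(n+1)_{kl}. *)

From HB Require Import structures.
From mathcomp Require Import all_boot all_order all_algebra.
From mathcomp Require Import ring.
Import GRing.Theory Num.Theory.
Set Implicit Arguments. Unset Strict Implicit. Unset Printing Implicit Defensive.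
Local Open Scope ring_scope.

Lemma addr_cancel_pairs (V : zmodType) (p q x y z t : V) :
  (p - x + q - y) + (z - p + t - q) = z - x + t - y.
Proof.
rewrite addrC !addrA (addrAC _ t) (addrAC _ t) (addrAC (z - p)) subrK.
by rewrite (addrAC _ _ q) (addrAC _ _ q) subrK (addrAC z).
Qed.

Lemma signr_even (R : pzRingType) m : (-1 : R) ^+ (2 * m) = 1.
Proof. by rewrite exprM sqrrN !expr1n. Qed.

Lemma kdeltaC {K : nzRingType} {T : eqType} (x y : T) : kdelta K x y = kdelta K y x.
Proof. by rewrite /kdelta eq_sym. Qed.

Lemma kdelta_id {K : nzRingType} {T : eqType} (x : T) : kdelta K x x = 1.
Proof. by rewrite /kdelta eqxx. Qed.

Lemma kdelta_neq {K : nzRingType} {T : eqType} (x y : T) : x != y -> kdelta K x y = 0.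
Proof. by rewrite /kdelta => /negbTE ->. Qed.

Lemma sum_kdelta (K : nzRingType) (V : lmodType K) (T : finType)
    (F : T -> V) (y : T) :
  \sum_x kdelta K x y *: F x = F y.
Proof.
rewrite (bigD1 y) //= kdelta_id scale1r big1 ?addr0 // => x /kdelta_neq ->.
exact: scale0r.
Qed.

Section Indices.
Variable N : nat.
Implicit Types (k l : idx N) (a : 'I_N).

Lemma inegK : involutive (@ineg N).
Proof. by move=> [a s]; rewrite /ineg negbK. Qed.

Lemma ineg_inj : injective (@ineg N).
Proof. exact: inv_inj inegK. Qed.

Lemma neq_ineg k : k != ineg k.
Proof. by case: k => a s; rewrite xpair_eqE eqxx; case: s. Qed.

Lemma ineg_neq k : ineg k != k.
Proof. by rewrite eq_sym neq_ineg. Qed.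

Lemma ipar_addn_ineg k : (ipar k + ipar (ineg k) = 1)%N.
Proof. by case: k => a []. Qed.

Lemma neq_idx_abs k l : k.1 != l.1 -> k != l.
Proof. by apply: contra => /eqP ->. Qed.

Lemma signr_ineg (K : pzRingType) k : (-1 : K) ^+ ipar (ineg k) = - (-1) ^+ ipar k.
Proof. by case: k => a []; rewrite /ipar /= ?expr0 ?expr1 ?opprK. Qed.

Lemma sum_idx (V : zmodType) (F : idx N -> V) :
  \sum_k F k = \sum_a (F (ipos a) + F (ineg (ipos a))).
Proof.
transitivity (\sum_a \sum_(s : bool) F (a, s)).
  by rewrite pair_bigA; apply: eq_bigr => -[].
by apply: eq_bigr => a _; rewrite big_bool addrC.
Qed.

End Indices.

Lemma sum_ord_split_at (V : zmodType) n (F : 'I_n -> V) (a : 'I_n) :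
  (forall b : 'I_n, (b < a)%N -> F b = 0) ->
  \sum_b F b = F a + \sum_(b : 'I_n | (a < b)%N) F b.
Proof.
move=> F0; rewrite (bigD1 a) //= (bigID (fun b : 'I_n => (a < b)%N)) /=.
rewrite [X in _ + (_ + X)]big1 ?addr0 => [|b /andP[ba]]; last first.
  rewrite -leqNgt leq_eqVlt => /orP[/eqP/val_inj ab | /F0 //].
  by rewrite ab eqxx in ba.
congr (_ + _); apply: eq_bigl => b /=.
by apply/andb_idl => ab; apply: contraTneq ab => ->; rewrite ltnn.
Qed.

Section CMatrix.
Variables (K : fieldType) (V : lmodType K) (N : nat)
  (rho : idx N -> idx N -> {linear V -> V}).
Implicit Types (i j k l p : idx N) (w : V).

Local Notation C := (Cact rho).
Local Notation sgn p := ((-1 : K) ^+ ipar p).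
Local Notation ssgn i j k l := ((-1 : K) ^+ ((ipar i + ipar j) * (ipar k + ipar l))%N).
Arguments Cact : simpl never.

Lemma Cact1 i j w : C 1 i j w = rho i j w.
Proof. by []. Qed.

Lemma CactS n i j w : C n.+2 i j w = \sum_p sgn p *: rho i p (C n.+1 p j w).
Proof. by []. Qed.

Lemma CactZ n i j (c : K) w : C n i j (c *: w) = c *: C n i j w.
Proof.
elim: n i j w => [|[|n] IH] i j w; first by rewrite /= scaler0.
  by rewrite !Cact1 linearZ.
rewrite !CactS scaler_sumr; apply: eq_bigr => p _.
by rewrite IH linearZ /= !scalerA mulrC.
Qed.

Lemma Cact0 n i j : C n i j 0 = 0.
Proof. by have := CactZ n i j 0 0; rewrite !scale0r. Qed.

Lemma ssgn_mul i j k p l : ssgn i j k p * ssgn i j p l = ssgn i j k l.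
Proof.
rewrite -exprD -[LHS]signr_odd -[RHS]signr_odd /ipar.
by case: i => ? []; case: j => ? []; case: k => ? []; case: p => ? []; case: l => ? [].
Qed.

(* This is what makes the delta_{ip}- and delta_{pj}-terms cancel in the
   inductive step of [Cact_comm]. *)
Lemma ssgn_cross i j k : sgn i * ssgn i j k i = sgn j * ssgn i j k j.
Proof.
rewrite -!exprD -[LHS]signr_odd -[RHS]signr_odd /ipar.
by case: i => ? []; case: j => ? []; case: k => ? [].
Qed.

Lemma ssgn_cross_ineg i j k :
  sgn (ineg i) * ssgn i j k (ineg i) = sgn (ineg j) * ssgn i j k (ineg j).
Proof.
rewrite -!exprD -[LHS]signr_odd -[RHS]signr_odd /ipar.
by case: i => ? []; case: j => ? []; case: k => ? [].
Qed.

Hypothesis rho_ineg : forall i j, rho (ineg i) (ineg j) = rho i j.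

Lemma rho_inegl i j : rho (ineg i) j = rho i (ineg j).
Proof. by rewrite -rho_ineg inegK. Qed.

Lemma Cact_ineg n i j w : C n.+1 (ineg i) (ineg j) w = (-1) ^+ n *: C n.+1 i j w.
Proof.
elim: n i j w => [|n IH] i j w; first by rewrite !Cact1 rho_ineg scale1r.
rewrite !CactS (reindex_inj (@ineg_inj N)) scaler_sumr; apply: eq_bigr => p _.
rewrite signr_ineg rho_ineg IH linearZ /= !scalerA exprS; congr (_ *: _).
by rewrite mulN1r !mulNr [X in _ = - X]mulrC.
Qed.

Lemma Cact_inegl n i j w : C n.+1 (ineg i) j w = (-1) ^+ n *: C n.+1 i (ineg j) w.
Proof. by rewrite -Cact_ineg inegK. Qed.

(* The right-hand side of the defining relation of q(N) for [F_ij, F_kl], with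
   C^(n) in place of F; [comm_rhs 1] is the relation itself. *)
Definition comm_rhs n i j k l w :=
  kdelta K k j *: C n i l w - ssgn i j k l *: (kdelta K i l *: C n k j w)
  + kdelta K k (ineg j) *: C n (ineg i) l w
  - ssgn i j k l *: (kdelta K (ineg i) l *: C n k (ineg j) w).

Hypothesis rho_scomm : forall i j k l w,
  let s : K := ssgn i j k l in
  rho i j (rho k l w) - s *: rho k l (rho i j w) =
    kdelta K k j *: rho i l w - s *: (kdelta K i l *: rho k j w)
    + kdelta K k (ineg j) *: rho (ineg i) l w
    - s *: (kdelta K (ineg i) l *: rho k (ineg j) w).

Lemma rho_comm i j k l w :
  rho i j (rho k l w) = ssgn i j k l *: rho k l (rho i j w) + comm_rhs 1 i j k l w.
Proof. by apply/eqP; rewrite addrC -subr_eq; apply/eqP/rho_scomm. Qed.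

Lemma sum_comm_rhs_inner n i j k l w :
  \sum_p (sgn p * ssgn i j k p) *: rho k p (comm_rhs n.+1 i j p l w) =
    (sgn j * ssgn i j k j) *: rho k j (C n.+1 i l w)
    - ssgn i j k l *: (kdelta K i l *: C n.+2 k j w)
    + (sgn (ineg j) * ssgn i j k (ineg j)) *: rho k (ineg j) (C n.+1 (ineg i) l w)
    - ssgn i j k l *: (kdelta K (ineg i) l *: C n.+2 k (ineg j) w).
Proof.
have term p : (sgn p * ssgn i j k p) *: rho k p (comm_rhs n.+1 i j p l w) =
    kdelta K p j *: ((sgn p * ssgn i j k p) *: rho k p (C n.+1 i l w))
    - (ssgn i j k l * kdelta K i l) *: (sgn p *: rho k p (C n.+1 p j w))
    + kdelta K p (ineg j) *: ((sgn p * ssgn i j k p) *: rho k p (C n.+1 (ineg i) l w))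
    - (ssgn i j k l * kdelta K (ineg i) l) *: (sgn p *: rho k p (C n.+1 p (ineg j) w)).
  rewrite /comm_rhs !(linearB, linearD, linearZ) /= !(scalerDr, scalerN, scalerA).
  by congr (_ *: _ - _ *: _ + _ *: _ - _ *: _); rewrite -?(ssgn_mul i j k p l); ring.
rewrite (eq_bigr _ (fun p _ => term p)) !big_split /= !sumrN !sum_kdelta.
by rewrite -!scaler_sumr -!CactS !scalerA.
Qed.

Lemma sum_comm_rhs_outer n i j k l w :
  \sum_p sgn p *: comm_rhs 1 i j k p (C n.+1 p l w) =
    kdelta K k j *: C n.+2 i l w
    - (sgn i * ssgn i j k i) *: rho k j (C n.+1 i l w)
    + kdelta K k (ineg j) *: C n.+2 (ineg i) l w
    - (sgn (ineg i) * ssgn i j k (ineg i)) *: rho k (ineg j) (C n.+1 (ineg i) l w).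
Proof.
have term p : sgn p *: comm_rhs 1 i j k p (C n.+1 p l w) =
    kdelta K k j *: (sgn p *: rho i p (C n.+1 p l w))
    - kdelta K p i *: ((sgn p * ssgn i j k p) *: rho k j (C n.+1 p l w))
    + kdelta K k (ineg j) *: (sgn p *: rho (ineg i) p (C n.+1 p l w))
    - kdelta K p (ineg i) *: ((sgn p * ssgn i j k p) *: rho k (ineg j) (C n.+1 p l w)).
  rewrite /comm_rhs !Cact1 !(scalerDr, scalerN, scalerA).
  by congr (_ *: _ - _ *: _ + _ *: _ - _ *: _);
    rewrite ?(kdeltaC i p) ?(kdeltaC (ineg i) p); ring.
rewrite (eq_bigr _ (fun p _ => term p)) !big_split /= !sumrN !sum_kdelta.
by rewrite -!scaler_sumr -!CactS.
Qed.

Lemma Cact_comm n i j k l w :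
  rho i j (C n.+1 k l w) =
    ssgn i j k l *: C n.+1 k l (rho i j w) + comm_rhs n.+1 i j k l w.
Proof.
elim: n i j k l w => [|n IH] i j k l w; first exact: rho_comm.
have expand p : rho i j (sgn p *: rho k p (C n.+1 p l w)) =
    ssgn i j k l *: (sgn p *: rho k p (C n.+1 p l (rho i j w)))
    + (sgn p * ssgn i j k p) *: rho k p (comm_rhs n.+1 i j p l w)
    + sgn p *: comm_rhs 1 i j k p (C n.+1 p l w).
  rewrite linearZ /= rho_comm IH [rho k p _]linearD /= scalerDr scalerDr scalerDr.
  congr (_ + _ + _); last by rewrite scalerA.
  by rewrite [rho k p _]linearZ /= !scalerA -(ssgn_mul i j k p l); congr (_ *: _); ring.
rewrite CactS linear_sum /= (eq_bigr _ (fun p _ => expand p)) !big_split /=.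
rewrite -scaler_sumr -CactS sum_comm_rhs_inner sum_comm_rhs_outer.
by rewrite ssgn_cross ssgn_cross_ineg -addrA addr_cancel_pairs.
Qed.

Lemma rho_sq_ineg (two_neq0 : (2 : K) != 0) k w :
  rho k (ineg k) (rho k (ineg k) w) = rho k k w.
Proof.
have := rho_comm k (ineg k) k (ineg k) w.
rewrite /comm_rhs inegK !kdelta_id !kdelta_neq ?neq_ineg ?ineg_neq // ipar_addn_ineg.
rewrite !Cact1 rho_ineg expr1 !scale0r !scale1r !scaleN1r oppr0 subr0 add0r opprK => h.
apply: (scalerI two_neq0); rewrite !scaler_nat !mulr2n {1}h.
by rewrite addrAC addNr add0r.
Qed.

Variable v : V.
Hypothesis rho_hw : forall i j, (i.1 < j.1)%N -> rho i j v = 0.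

Lemma Cact_comm_hw n i p j :
  (i.1 < p.1)%N -> rho i p (C n.+1 p j v) = comm_rhs n.+1 i p p j v.
Proof. by move=> ip; rewrite Cact_comm rho_hw // Cact0 scaler0 add0r. Qed.

Lemma Cact_hw n i j : (i.1 < j.1)%N -> C n.+1 i j v = 0.
Proof.
elim: n i j => [|n IH] i j ij; first by rewrite Cact1 rho_hw.
rewrite CactS big1 // => p _.
have [pj | jp] := ltnP p.1 j.1; first by rewrite IH // linear0 scaler0.
have ij' : i.1 != j.1 by rewrite neq_ltn ij.
rewrite Cact_comm_hw ?(leq_trans ij) // /comm_rhs IH // (kdelta_neq (neq_ineg p)).
rewrite (kdelta_neq (neq_idx_abs ij')) (kdelta_neq (@neq_idx_abs _ (ineg i) j ij')).
by rewrite !(scale0r, scaler0, subrr, addr0, oppr0).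
Qed.

Variable lam : 'I_N -> K.
Hypothesis rho_weight : forall a, rho (ipos a) (ipos a) v = lam a *: v.

Lemma Cact_weight n a k : k.1 = a ->
  rho (ipos a) (ipos a) (C n.+1 k (ipos a) v) = lam a *: C n.+1 k (ipos a) v.
Proof.
case: k => b s /= <-{a}; rewrite Cact_comm rho_weight CactZ /comm_rhs.
case: s; rewrite !kdelta_id !kdelta_neq ?neq_ineg ?ineg_neq // /ipar /= expr0.
all: by rewrite !(scale0r, scale1r, scaler0, add0r, subr0, addr0, subrr, addNr).
Qed.

Lemma Cact_diag_rec n a :
  C n.+2 (ipos a) (ipos a) v =
    lam a *: C n.+1 (ipos a) (ipos a) v
    - rho (ipos a) (ineg (ipos a)) (C n.+1 (ineg (ipos a)) (ipos a) v)
    - (1 + (-1) ^+ n) *: \sum_(b < N | (a < b)%N) C n.+1 (ipos b) (ipos b) v.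
Proof.
rewrite CactS sum_idx (sum_ord_split_at (a := a)) => [|b ba]; last first.
  by rewrite !Cact_hw // !raddf0 addr0.
rewrite Cact_weight // /ipar /= expr0 expr1 scale1r scaleN1r scaler_sumr -sumrN.
congr (_ + _); apply: eq_bigr => b ab.
rewrite !Cact_comm_hw // /comm_rhs !kdelta_id !kdelta_neq ?neq_ineg ?ineg_neq //.
rewrite Cact_ineg /ipar /= expr0 expr1.
rewrite !(scale0r, scale1r, scaleN1r, addr0, subr0, scaler0).
by rewrite oppr0 subr0 opprK scalerDl scale1r !opprD addrACA subrr add0r.
Qed.

Lemma Cact_offdiag_rec n a :
  C n.+2 (ineg (ipos a)) (ipos a) v =
    rho (ipos a) (ineg (ipos a)) (C n.+1 (ipos a) (ipos a) v)
    - lam a *: C n.+1 (ineg (ipos a)) (ipos a) v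
    + ((-1) ^+ n - 1) *: \sum_(b < N | (a < b)%N) C n.+1 (ipos b) (ineg (ipos b)) v.
Proof.
rewrite CactS sum_idx (sum_ord_split_at (a := a)) => [|b ba]; last first.
  by rewrite !Cact_hw // !raddf0 addr0.
rewrite rho_inegl rho_ineg Cact_weight // /ipar /= expr0 expr1 scale1r scaleN1r.
rewrite scaler_sumr; congr (_ + _); apply: eq_bigr => b ab.
rewrite !Cact_comm_hw // /comm_rhs inegK !kdelta_id !kdelta_neq ?neq_ineg ?ineg_neq //.
rewrite (Cact_inegl n (ipos b) (ipos b)) /ipar /=.
rewrite !(addn0, add0n, muln0, muln1) sqrrN expr1n expr0.
rewrite !(scale0r, scale1r, scaleN1r, scaler0, addr0, subr0).
by rewrite scalerBl scale1r opprB addrC subrKA.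
Qed.

Lemma Cact_diag_odd_rec (two_neq0 : (2 : K) != 0) m a :
  C (2 * m).+3 (ipos a) (ipos a) v =
    (lam a * (lam a - 1)) *: C (2 * m).+1 (ipos a) (ipos a) v
    - (2 * lam a) *: \sum_(b < N | (a < b)%N) C (2 * m).+1 (ipos b) (ipos b) v.
Proof.
rewrite (Cact_diag_rec (2 * m).+1) (Cact_diag_rec (2 * m)) (Cact_offdiag_rec (2 * m)).
rewrite exprS signr_even mulr1 subrr !scale0r addr0 subr0.
rewrite [rho _ _ (_ - _)]linearB /= rho_sq_ineg // Cact_weight //.
rewrite [rho _ _ (lam a *: _)]linearZ /=.
rewrite scalerDr scalerBr !scalerN mulrBr mulr1 scalerBl (mulrC 2 (lam a)) -!scalerA.
set B := lam a *: rho _ _ _.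
by rewrite opprB addrA (addrAC _ _ B) subrK addrAC.
Qed.

End CMatrix.

Theorem proposition5 (K : numClosedFieldType) (V : lmodType K) (N : nat)
  (rho : idx N -> idx N -> {linear V -> V})
  (Hrep : is_qrep rho)
  (v : V) (lam : 'I_N -> K)
  (Hhw : forall i j : idx N, (i.1 < j.1)%N -> rho i j v = 0)
  (Hwt : forall a : 'I_N, rho (ipos a) (ipos a) v = lam a *: v) :
  forall (m : nat) (a : 'I_N), (1 <= m)%N ->
    Cact rho (2 * m + 1) (ipos a) (ipos a) v
      = Cact rho (2 * m + 1) (ineg (ipos a)) (ineg (ipos a)) v /\
    Cact rho (2 * m + 1) (ipos a) (ipos a) v
      = (lam a * (lam a - 1)) *: Cact rho (2 * m - 1) (ipos a) (ipos a) v
        - (2 * lam a) *: \sum_(b : 'I_N | (a < b)%N)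
                           Cact rho (2 * m - 1) (ipos b) (ipos b) v.
Proof.
case: Hrep => rho_ineg rho_scomm [//|m] a _.
have -> : (2 * m.+1 + 1 = (2 * m).+3)%N by rewrite mulnS addn1.
have -> : (2 * m.+1 - 1 = (2 * m).+1)%N by rewrite mulnS.
split.
  by rewrite Cact_ineg // !exprS signr_even mulr1 mulrNN mulr1 scale1r.
by apply: Cact_diag_odd_rec; rewrite ?pnatr_eq0.
Qed.
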